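(* For all $m\ge2$ (and all $n$, with the convention below), $$A_{n,m}(u,v)=B_{n-1,m}(uv)+A_{n-1,m}(1,v)+A_{n-2,m-1}(1,uv)+\frac{uv}{1-uv}\Big(A_{n-1,m-1}(1,uv)-(uv)^mA_{n-1,m-1}(1,1)\Big)$$ and $$B_{n,m}(v)=B_{n-1,m}(v)+A_{n-2,m-1}(1,v)+\frac{v}{1-v}\Big(A_{n-1,m-1}(1,v)-v^mA_{n-1,m-1}(1,1)\Big).$$
   Context: An ascent sequence of length $n$ is a sequence $x_1\cdots x_n$ of non-negative integers with $x_1=0$ and $x_i\le \mathrm{asc}(x_1\cdots x_{i-1})+1$ for $1<i\le n$, where $\mathrm{asc}$ counts ascents (indices $j$ with $x_j<x_{j+1}$). It avoids $021$ if there are no $i<j<k$ with $x_i<x_k<x_j$. For $n\ge1$, $0\le s\le r\le m<n$, let $a_{n,m,r,s}$ be the number of $021$-avoiding ascent sequences of length $n$ with exactly $m$ ascents, largest letter $r$ and last letter $s$. Define $A_{n,m,r}(u)=\sum_{s=0}^r a_{n,m,r,s}u^s$, $A_{n,m}(u,v)=\sum_{r=0}^m A_{n,m,r}(u)v^r$, and $B_{n,m}(v)=\sum_{r=0}^m a_{n,m,r,r}v^r$ for $n>m\ge0$, with all these polynomials taken to be $0$ when $n\le m$ or $n<1$. (The quotients by $1-uv$ and $1-v$ are polynomials.) *)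

From HB Require Import structures.
From mathcomp Require Import all_boot all_order all_algebra.
Set Implicit Arguments. Unset Strict Implicit. Unset Printing Implicit Defensive.
Import Order.TTheory GRing.Theory Num.Theory.

Definition asc (x : seq nat) : nat :=
  \sum_(j < (size x).-1) (nth 0 x j < nth 0 x j.+1).

Definition is_ascent_seq (x : seq nat) : bool :=
  (0 < size x) && (nth 0 x 0 == 0) &&
  [forall i : 'I_(size x), (0 < i) ==> (nth 0 x i <= (asc (take i x)).+1)].

Definition avoids021 (x : seq nat) : bool :=
  [forall i : 'I_(size x), forall j : 'I_(size x), forall k : 'I_(size x),
     ~~ [&& (i < j)%N, (j < k)%N, nth 0 x i < nth 0 x k & nth 0 x k < nth 0 x j]].

Definition max_letter (x : seq nat) : nat := foldr maxn 0 x.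

(* a_{n,m,r,s}.  Every ascent sequence of length n has letters < n, so it
   suffices to enumerate n-tuples over 'I_n. *)
Definition a_cnt (n m r s : nat) : nat :=
  #|[set t : n.-tuple 'I_n |
     let x := map val t in
     [&& is_ascent_seq x, avoids021 x, asc x == m,
         max_letter x == r & last 0 x == s]]|.

Local Open Scope ring_scope.

Definition A_ev (R : comRingType) (n m : nat) (u v : R) : R :=
  if (m < n)%N then
    \sum_(r < m.+1) \sum_(s < r.+1) (a_cnt n m r s)%:R * u ^+ s * v ^+ r
  else 0.

Definition B_ev (R : comRingType) (n m : nat) (v : R) : R :=
  if (m < n)%N then \sum_(r < m.+1) (a_cnt n m r r)%:R * v ^+ r else 0.

From HB Require Import structures.
From mathcomp Require Import all_boot all_order all_algebra.
From mathcomp Require Import zify ring.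
Import GRing.Theory.

(* A nonempty 021-avoiding ascent sequence y extends by a letter t exactly
   when t = 0 or max y <= t <= asc y + 1.  Appending 0 changes neither the
   ascents nor the largest letter: this gives the term A_{n-1,m}(1,v).
   Appending t >= max(1, max y) makes t both the last and the largest letter,
   and creates an ascent iff t exceeds the last letter of y.  For t = max y
   this gives B_{n-1,m}(uv) when y ends in its maximum and A_{n-2,m-1}(1,uv)
   otherwise, since the sequences ending below their maximum are exactly the
   0-extensions.  For t > max y an ascent is always created, and summing (uv)^t
   over max y < t <= m gives the geometric term.  The recurrence for B is the
   same computation restricted to sequences ending in their maximum. *)

Lemma max_letter_rcons y t : max_letter (rcons y t) = maxn (max_letter y) t.
Proof.
elim: y => [|a l IH] /=; first by rewrite max0n.
by rewrite -/(max_letter (rcons l t)) IH maxnA.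
Qed.

Lemma nth_le_max_letter y i : nth 0 y i <= max_letter y.
Proof.
elim: y i => [|a l IH] [|i] //=; first by rewrite leq_maxl.
by rewrite (leq_trans (IH i)) // leq_maxr.
Qed.

Lemma last_le_max_letter y : last 0 y <= max_letter y.
Proof. by rewrite -nth_last nth_le_max_letter. Qed.

Lemma mem_le_max_letter x a : a \in x -> a <= max_letter x.
Proof. by move=> xa; rewrite -(nth_index 0 xa) nth_le_max_letter. Qed.

Lemma max_letter_attained y :
  0 < max_letter y -> exists2 j, j < size y & nth 0 y j = max_letter y.
Proof.
elim: y => [|a l IH] //= max_gt0.
case: (leqP (max_letter l) a) => [le_la|lt_al].
  by exists 0 => //; rewrite /= (maxn_idPl le_la).
have /IH [j lt_j Ej] : 0 < max_letter l by case: (max_letter l) lt_al.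
by exists j.+1 => //; rewrite /= Ej (maxn_idPr (ltnW lt_al)).
Qed.

Lemma asc_le_size y : asc y <= (size y).-1.
Proof.
rewrite /asc -[X in _ <= X]card_ord -sum1_card.
by apply: leq_sum => j _; exact: leq_b1.
Qed.

Lemma asc_rcons y t : y != [::] -> asc (rcons y t) = asc y + (last 0 y < t).
Proof.
case: y => [|a l] // _.
rewrite /asc size_rcons /= big_ord_recr /=; congr addn.
  apply: eq_bigr => j _ /=.
  have lt_jl : j < size l := ltn_ord j.
  by rewrite -rcons_cons !nth_rcons /= ltnS (ltnW lt_jl) lt_jl.
rewrite -rcons_cons !nth_rcons /= ltnSn ltnn eqxx.
by rewrite -[size l]/((size (a :: l)).-1) nth_last.
Qed.

Lemma asc_eq0_max_letter y : max_letter y = 0 -> asc y = 0.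
Proof.
move=> max0; rewrite /asc big1 // => j _.
by have := nth_le_max_letter y j.+1; rewrite max0 leqn0 => /eqP ->.
Qed.

Lemma forall_ordS k (P : nat -> bool) :
  [forall i : 'I_k.+1, P i] = [forall i : 'I_k, P i] && P k.
Proof.
apply/forallP/andP => [H|[H1 H2] i].
  split; last exact: (H ord_max).
  by apply/forallP => i; exact: (H (widen_ord (leqnSn k) i)).
case: (ltnP i k) => lt_ik; first exact: (forallP H1 (Ordinal lt_ik)).
by have -> : nat_of_ord i = k by have := ltn_ord i; lia.
Qed.

Lemma is_ascent_seq_rcons y t : y != [::] ->
  is_ascent_seq (rcons y t) = is_ascent_seq y && (t <= (asc y).+1).
Proof.
move=> y_ne; have y_gt0 : 0 < size y by rewrite lt0n size_eq0.
rewrite /is_ascent_seq size_rcons (forall_ordS (size y)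
  (fun i => (0 < i) ==> (nth 0 (rcons y t) i <= (asc (take i (rcons y t))).+1))).
rewrite y_gt0 /= (nth_rcons _ _ _ (size y)) ltnn eqxx -cats1 take_size_cat //.
rewrite nth_cat y_gt0 andbA; congr (_ && _ && _).
apply: eq_forallb => i /=.
by rewrite nth_cat ltn_ord takel_cat // ltnW.
Qed.

Lemma is_ascent_seq_head x : is_ascent_seq x -> nth 0 x 0 = 0.
Proof. by case/andP => /andP [_ /eqP]. Qed.

Lemma avoids021P x : reflect
  (forall i j k, i < j -> j < k -> k < size x ->
     ~~ ((nth 0 x i < nth 0 x k) && (nth 0 x k < nth 0 x j)))
  (avoids021 x).
Proof.
apply: (iffP idP) => [avx i j k lt_ij lt_jk lt_k|avx].
  have lt_j : j < size x by apply: ltn_trans lt_k.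
  have lt_i : i < size x by apply: ltn_trans lt_j.
  move/forallP: avx => /(_ (Ordinal lt_i)) /forallP /(_ (Ordinal lt_j)).
  by move=> /forallP /(_ (Ordinal lt_k)) /=; rewrite lt_ij lt_jk.
apply/forallP => i; apply/forallP => j; apply/forallP => k.
apply/negP => /and4P [lt_ij lt_jk H1 H2].
by move: (avx i j k lt_ij lt_jk (ltn_ord k)); rewrite H1 H2.
Qed.

Definition ascent021 x := is_ascent_seq x && avoids021 x.

Lemma ascent021_neq0 x : ascent021 x -> x != [::].
Proof. by case: x. Qed.

Lemma ascent021_singleton a : ascent021 [:: a] = (a == 0).
Proof.
rewrite /ascent021; have -> : avoids021 [:: a].
  apply/avoids021P => i j k _ lt_jk; rewrite ltnS leqn0 => /eqP k0.
  by rewrite k0 in lt_jk.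
rewrite /is_ascent_seq /= andbT.
by case: forallP => [_|[]]; rewrite ?andbT // => i; rewrite (ord1 i).
Qed.

Lemma max_letter_le_asc x : is_ascent_seq x -> max_letter x <= asc x.
Proof.
elim/last_ind: x => [|y t IH] // ascx.
case: (eqVneq y [::]) => [y0|y_ne].
  by subst y; move: (is_ascent_seq_head _ ascx) => /= ->; rewrite /asc big_ord0.
move: ascx; rewrite is_ascent_seq_rcons // => /andP [/IH le_my le_t].
rewrite max_letter_rcons asc_rcons // geq_max.
have le_last := last_le_max_letter y.
case: (ltnP (last 0 y) t) => [_|le_tl] /=.
  by rewrite addn1 le_t (leq_trans le_my).
by rewrite addn0 le_my (leq_trans le_tl (leq_trans le_last le_my)).
Qed.

Lemma ascent021_prefix y t : y != [::] -> ascent021 (rcons y t) -> ascent021 y.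
Proof.
move=> y_ne /andP []; rewrite /ascent021 is_ascent_seq_rcons // => /andP [-> _] /=.
move=> /avoids021P avx; apply/avoids021P => i j k lt_ij lt_jk lt_k.
move: (avx i j k lt_ij lt_jk); rewrite size_rcons ltnS ltnW //.
have lt_j : j < size y by apply: ltn_trans lt_k.
have lt_i : i < size y by apply: ltn_trans lt_j.
by rewrite !nth_rcons lt_i lt_j lt_k => /(_ isT).
Qed.

(* A new letter t > 0 below the maximum would make a 021 pattern with the
   initial 0 and an occurrence of the maximum. *)
Lemma ascent021_rcons y t : y != [::] -> ascent021 y ->
  ascent021 (rcons y t) =
    ((t == 0) || (max_letter y <= t)) && (t <= (asc y).+1).
Proof.
move=> y_ne /andP [ascy avy]; have y_gt0 : 0 < size y by rewrite lt0n size_eq0.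
rewrite /ascent021 is_ascent_seq_rcons // ascy /= andbC; congr (_ && _).
apply/idP/idP => [/avoids021P avx|t_ok].
  apply/negPn/negP; rewrite negb_or -ltnNge => /andP [t_ne0 lt_tm].
  have [j lt_j Ej] : exists2 j, j < size y & nth 0 y j = max_letter y.
    by apply: max_letter_attained; move: lt_tm; case: (max_letter y).
  have j_gt0 : 0 < j.
    case: j lt_j Ej => // _ E0.
    by move: lt_tm; rewrite -E0 (is_ascent_seq_head _ ascy).
  move: (avx 0 j (size y) j_gt0 lt_j); rewrite size_rcons ltnSn => /(_ isT).
  by rewrite !nth_rcons y_gt0 lt_j ltnn eqxx is_ascent_seq_head // Ej lt0n t_ne0 lt_tm.
apply/avoids021P => i j k lt_ij lt_jk; rewrite size_rcons ltnS => le_k.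
have lt_j : j < size y by exact: leq_trans lt_jk le_k.
have lt_i : i < size y by apply: ltn_trans lt_j.
rewrite !nth_rcons lt_i lt_j.
case: (ltnP k (size y)) => [lt_k|ge_k]; first exact: (avoids021P _ avy).
rewrite (_ : k == size y); last by rewrite eqn_leq le_k ge_k.
case/orP: t_ok => [/eqP -> // | le_mt].
by apply/nandP; right; rewrite -leqNgt (leq_trans (nth_le_max_letter y j) le_mt).
Qed.

(* The letters t > 0 that can follow a sequence with maximum r and r' ascents. *)
Definition new_letters (r r' : nat) : seq nat := iota (maxn 1 r) (r'.+2 - maxn 1 r).

Definition extensions (y : seq nat) : seq nat :=
  0 :: new_letters (max_letter y) (asc y).

Fixpoint ascent021_seqs (n : nat) : seq (seq nat) :=
  match n with
  | 0 => [::]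
  | 1 => [:: [:: 0]]
  | n'.+1 => [seq rcons y t | y <- ascent021_seqs n', t <- extensions y]
  end.

Lemma mem_extensions y t : max_letter y <= asc y ->
  (t \in extensions y) = ((t == 0) || (max_letter y <= t)) && (t <= (asc y).+1).
Proof.
move=> le_ma; rewrite inE mem_iota.
case: (eqVneq t 0) => [->|t_ne0] //=.
rewrite (_ : maxn 1 _ + _ = (asc y).+2); last by lia.
by apply/andP/andP => [] []; lia.
Qed.

Lemma rcons_new_letter y t : y != [::] ->
  t \in new_letters (max_letter y) (asc y) ->
  [/\ asc (rcons y t) = asc y + (last 0 y < t), max_letter (rcons y t) = t
     & last 0 (rcons y t) = t].
Proof.
move=> y_ne; rewrite mem_iota => /andP [le_t _].
have le_mt : max_letter y <= t by rewrite (leq_trans _ le_t) ?leq_maxr.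
by rewrite asc_rcons // max_letter_rcons (maxn_idPr le_mt) last_rcons.
Qed.

Lemma mem_ascent021_seqs n x :
  (x \in ascent021_seqs n) = ascent021 x && (size x == n).
Proof.
elim: n x => [|[|n] IH] x.
- by case: x => [|a l]; rewrite ?andbF.
- case: x => [|a [|b l]] //=; last by rewrite andbF inE eqseq_cons /= andbF.
  by rewrite inE ascent021_singleton eqseq_cons !andbT.
apply/allpairsPdep/andP => [[y [t [yS tS ->]]]|[ascx]].
  move: yS; rewrite IH => /andP [ascy /eqP <-].
  have le_ma : max_letter y <= asc y by case/andP: ascy => /max_letter_le_asc.
  by rewrite ascent021_rcons ?ascent021_neq0 // -mem_extensions // tS size_rcons.
case/lastP: x ascx => [|y t] // ascx; rewrite size_rcons eqSS => sz.
have y_ne : y != [::] by case: y ascx sz.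
have ascy := ascent021_prefix _ _ y_ne ascx.
have le_ma : max_letter y <= asc y by case/andP: ascy => /max_letter_le_asc.
exists y, t; split => //; first by rewrite IH ascy.
by rewrite mem_extensions // -ascent021_rcons.
Qed.

Lemma uniq_ascent021_seqs n : uniq (ascent021_seqs n).
Proof.
elim: n => [|[|n] IH] //.
apply: allpairs_uniq_dep => //.
  move=> y _; rewrite /= /new_letters iota_uniq mem_iota andbT.
  by rewrite negb_and -ltnNge leq_maxl.
by move=> [y1 t1] [y2 t2] _ _ /= /rcons_inj [-> ->].
Qed.

Lemma ascent021_letter_lt_size x a : ascent021 x -> a \in x -> a < size x.
Proof.
move=> /andP [ascx _] xa.
have := leq_trans (mem_le_max_letter _ _ xa)
  (leq_trans (max_letter_le_asc _ ascx) (asc_le_size x)).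
by case: x ascx xa => //= b l _ _; rewrite ltnS.
Qed.

Lemma card_ascent021_tuples n (P : pred (seq nat)) :
  (forall x, P x -> ascent021 x) ->
  #|[set t : n.-tuple 'I_n | P (map val t)]| = count P (ascent021_seqs n).
Proof.
move=> P_asc; pose f (t : n.-tuple 'I_n) := map val (val t).
have f_inj : injective f by move=> t1 t2 /(inj_map val_inj) /val_inj.
rewrite cardE -(size_map f) -size_filter; apply/perm_size/uniq_perm.
- by rewrite (map_inj_uniq f_inj) enum_uniq.
- by rewrite filter_uniq // uniq_ascent021_seqs.
move=> x; rewrite mem_filter mem_ascent021_seqs.
apply/mapP/idP => [[t + ->]|/andP [Px /andP [ascx /eqP sz]]].
  by rewrite mem_enum inE => Pt; rewrite Pt P_asc //= /f size_map size_tuple.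
have x_lt : all (fun a => a < n) x.
  by apply/allP => a xa; rewrite -sz ascent021_letter_lt_size.
have val_x : map val (pmap (insub : nat -> option 'I_n) x) = x.
  elim: x x_lt {Px ascx sz} => [|a l IH] //= /andP [lt_a /IH].
  by rewrite insubT /= => ->.
have sz_x : size (pmap (insub : nat -> option 'I_n) x) == n.
  by rewrite -(size_map val) val_x sz.
exists (Tuple sz_x); last by rewrite /f /= val_x.
by rewrite mem_enum inE /= val_x.
Qed.

Lemma a_cnt_count n m r s : a_cnt n m r s =
  count (fun x => [&& asc x == m, max_letter x == r & last 0 x == s])
        (ascent021_seqs n).
Proof.
rewrite /a_cnt (card_ascent021_tuples _ (fun x => [&& is_ascent_seq x,
  avoids021 x, asc x == m, max_letter x == r & last 0 x == s])); last first.
  by move=> x /and3P [? ? _]; apply/andP.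
by apply: eq_in_count => x; rewrite mem_ascent021_seqs => /andP [/andP [-> ->] _].
Qed.

Lemma asc_lt_ascent021_seqs n x : x \in ascent021_seqs n -> asc x < n.
Proof.
rewrite mem_ascent021_seqs => /andP [/ascent021_neq0 x_ne /eqP <-].
by have := asc_le_size x; case: x x_ne.
Qed.

Local Open Scope ring_scope.

Section Evaluation.

Variable R : comRingType.

Lemma sum_ord_eq (n k : nat) (G : nat -> R) :
  \sum_(r < n) ((k == r :> nat)%:R * G r) = if (k < n)%N then G k else 0.
Proof.
elim: n => [|n IH]; first by rewrite big_ord0.
rewrite big_ord_recr /= IH.
case: (ltngtP k n) => [lt_kn|lt_nk|->].
- by rewrite ltnS ltnW // mul0r addr0.
- by rewrite ltnS leqNgt lt_nk mul0r addr0.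
- by rewrite ltnSn mul1r add0r.
Qed.

Lemma natr_count (T : Type) (a : pred T) (s : seq T) :
  (count a s)%:R = \sum_(x <- s) (a x)%:R :> R.
Proof. by elim: s => [|y s IH]; rewrite ?big_nil // big_cons natrD IH. Qed.

Lemma asc_neq_ascent021_seqs n m x :
  (n <= m)%N -> x \in ascent021_seqs n -> (asc x == m) = false.
Proof.
move=> le_nm /asc_lt_ascent021_seqs lt_xn.
by apply/negbTE; rewrite neq_ltn (leq_trans lt_xn le_nm).
Qed.

Lemma A_ev_eq0 n m (u v : R) : (n <= m)%N -> A_ev n m u v = 0.
Proof. by rewrite /A_ev ltnNge => ->. Qed.

Lemma B_ev_eq0 n m (v : R) : (n <= m)%N -> B_ev n m v = 0.
Proof. by rewrite /B_ev ltnNge => ->. Qed.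

Lemma A_ev_sum n m (u v : R) : A_ev n m u v =
  \sum_(x <- ascent021_seqs n)
    (asc x == m)%:R * (u ^+ last 0 x * v ^+ max_letter x).
Proof.
rewrite /A_ev; case: ltnP => [_|le_nm]; last first.
  symmetry; apply: big1_seq => x /andP [_ xS].
  by rewrite (asc_neq_ascent021_seqs _ _ _ le_nm xS) mul0r.
under eq_bigr => r _ do under eq_bigr => s _ do
  rewrite a_cnt_count natr_count !mulr_suml.
under eq_bigr => r _ do rewrite exchange_big.
rewrite exchange_big; apply: eq_big_seq => x.
rewrite mem_ascent021_seqs => /andP [/andP [ascx _] _].
case: (eqVneq (asc x) m) => [asc_m|_]; last first.
  by rewrite mul0r big1 // => r _; rewrite big1 // => s _; rewrite !mul0r.
transitivity (\sum_(r < m.+1) ((max_letter x == r)%:R *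
    (v ^+ r * \sum_(s < r.+1) ((last 0 x == s)%:R * u ^+ s)))).
  apply: eq_bigr => r _; rewrite !mulr_sumr; apply: eq_bigr => s _.
  by rewrite /= -mulnb natrM; ring.
rewrite (sum_ord_eq _ _
  (fun r => v ^+ r * \sum_(s < r.+1) ((last 0 x == s)%:R * u ^+ s))).
rewrite ltnS -asc_m max_letter_le_asc // (sum_ord_eq _ _ (fun s => u ^+ s)) ltnS.
by rewrite last_le_max_letter mul1r mulrC.
Qed.

Lemma B_ev_sum n m (v : R) : B_ev n m v =
  \sum_(x <- ascent021_seqs n)
    ((asc x == m) && (last 0 x == max_letter x))%:R * v ^+ max_letter x.
Proof.
rewrite /B_ev; case: ltnP => [_|le_nm]; last first.
  symmetry; apply: big1_seq => x /andP [_ xS].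
  by rewrite (asc_neq_ascent021_seqs _ _ _ le_nm xS) mul0r.
under eq_bigr => r _ do rewrite a_cnt_count natr_count !mulr_suml.
rewrite exchange_big; apply: eq_big_seq => x.
rewrite mem_ascent021_seqs => /andP [/andP [ascx _] _].
transitivity (((asc x == m) && (last 0 x == max_letter x))%:R *
   \sum_(r < m.+1) ((max_letter x == r)%:R * v ^+ r)).
  rewrite mulr_sumr; apply: eq_bigr => r _.
  have -> : [&& asc x == m, max_letter x == r & last 0 x == r] =
      (asc x == m) && (last 0 x == max_letter x) && (max_letter x == r).
    by case: (eqVneq (max_letter x) r) => [<-|_]; rewrite ?andbT ?andbF.
  by rewrite -mulnb natrM mulrA.
rewrite (sum_ord_eq _ _ (fun r => v ^+ r)).
case: (eqVneq (asc x) m) => [<-|_] /=; last by rewrite !mul0r.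
by rewrite ltnS max_letter_le_asc.
Qed.

Lemma sum_ascent021_seqsS k (F : seq nat -> R) :
  \sum_(x <- ascent021_seqs k.+2) F x =
  \sum_(y <- ascent021_seqs k.+1)
    (F (rcons y 0%N) +
     \sum_(t <- new_letters (max_letter y) (asc y)) F (rcons y t)).
Proof. by rewrite big_allpairs_dep; apply: eq_bigr => y _; rewrite big_cons. Qed.

Lemma ascent021_seqs_facts k y : y \in ascent021_seqs k.+1 ->
  [/\ y != [::], (last 0 y <= max_letter y)%N,
      (max_letter y <= asc y)%N & (max_letter y = 0 -> asc y = 0)%N].
Proof.
rewrite mem_ascent021_seqs => /andP [ascy _]; split.
- exact: ascent021_neq0.
- exact: last_le_max_letter.
- by case/andP: ascy => /max_letter_le_asc.
- exact: asc_eq0_max_letter.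
Qed.

(* Sequences ending below their maximum are exactly the 0-extensions of
   sequences with a positive maximum, which is automatic when m >= 1. *)
Lemma A_ev_last_lt_max k m (a : R) : (1 <= m)%N ->
  A_ev k.+1 m 1 a =
  \sum_(y <- ascent021_seqs k.+2)
    ((asc y == m) && (last 0 y < max_letter y)%N)%:R * a ^+ max_letter y.
Proof.
move=> m_gt0; rewrite A_ev_sum sum_ascent021_seqsS; apply: eq_big_seq => z zS.
have [z_ne _ _ max0_asc] := ascent021_seqs_facts _ _ zS.
rewrite big1_seq ?addr0; last first.
  move=> t /andP [_ /(rcons_new_letter _ _ z_ne) [_ -> ->]].
  by rewrite ltnn andbF mul0r.
rewrite asc_rcons // max_letter_rcons last_rcons maxn0 ltn0 addn0 expr1n mul1r.
case: (eqVneq (asc z) m) => [asc_m|] //=.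
suff -> : (0 < max_letter z)%N by [].
by rewrite lt0n; apply: contraTneq m_gt0 => /max0_asc; rewrite asc_m => ->.
Qed.

(* The weight of appending each admissible new letter t > 0 to a sequence with
   last letter s, maximum r and r' ascents. *)
Lemma sum_new_letters (a : R) (m r' r s : nat) :
  (2 <= m)%N -> (s <= r)%N -> (r <= r')%N -> (r = 0 -> r' = 0)%N ->
  \sum_(t <- new_letters r r') ((r' + (s < t)%N)%N == m)%:R * a ^+ t
  = ((r' == m) && (s == r))%:R * a ^+ r + ((r' == m.-1) && (s < r)%N)%:R * a ^+ r
    + (r' == m.-1)%:R * \sum_(t <- iota r.+1 (m - r)) a ^+ t.
Proof.
move=> m_ge2 le_sr le_rr' r0.
have [r_eq0|r_gt0] : r = 0%N \/ (0 < r)%N by case: (r); [left|right].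
  move: le_sr; rewrite r_eq0 r0 // leqn0 => /eqP ->.
  rewrite /new_letters big_seq1.
  by case: m m_ge2 => [|[|[|m]]] //= _; rewrite !mul0r !addr0.
rewrite /new_letters (maxn_idPr r_gt0) subSn ?leqW //= big_cons.
have Em : (r'.+1 == m) = (r' == m.-1) by case: m m_ge2.
congr (_ + _); last first.
  case: (eqVneq r' m.-1) => [r'_m|r'_ne]; last first.
    rewrite mul0r big1_seq // => t /andP [_]; rewrite mem_iota => /andP [lt_rt _].
    by rewrite (leq_ltn_trans le_sr lt_rt) addn1 Em (negbTE r'_ne) mul0r.
  rewrite mul1r (_ : r'.+1 = m); last by rewrite r'_m prednK // ltnW.
  apply: eq_big_seq => t; rewrite mem_iota => /andP [lt_rt _].
  by rewrite (leq_ltn_trans le_sr lt_rt) addn1 Em r'_m eqxx mul1r.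
case: (ltngtP s r) => [lt_sr|lt_rs|eq_sr].
- by rewrite addn1 Em andbF andbT /= mul0r add0r.
- by move: le_sr; rewrite leqNgt lt_rs.
- by rewrite addn0 andbT andbF /= mul0r addr0.
Qed.

Lemma mulr_sub_sum_geometric (a : R) r d :
  (1 - a) * \sum_(t <- iota r.+1 d) a ^+ t = a ^+ r.+1 - a ^+ (r.+1 + d).
Proof.
elim: d r => [|d IH] r; first by rewrite big_nil mulr0 addn0 subrr.
by rewrite /= big_cons mulrDr IH addnS -addSn !exprS; ring.
Qed.

End Evaluation.

Lemma sum_geometric (F : fieldType) (a : F) r m : 1 - a != 0 -> (r < m)%N ->
  \sum_(t <- iota r.+1 (m - r)) a ^+ t = a / (1 - a) * (a ^+ r - a ^+ m).
Proof.
move=> a_ne1 lt_rm.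
have := mulr_sub_sum_geometric _ a r (m - r); rewrite addSn subnKC ?(ltnW lt_rm) //.
by move=> E; apply: (mulfI a_ne1); rewrite E !exprS; field.
Qed.

Lemma A_ev_recurrence (F : fieldType) k m (u v : F) : (2 <= m)%N -> u * v != 1 ->
  A_ev k.+3 m u v =
    B_ev k.+2 m (u * v) + A_ev k.+2 m 1 v + A_ev k.+1 m.-1 1 (u * v)
    + (u * v) / (1 - u * v) *
      (A_ev k.+2 m.-1 1 (u * v) - (u * v) ^+ m * A_ev k.+2 m.-1 1 1).
Proof.
move=> m_ge2 uv_ne1; have den_neq0 : 1 - u * v != 0 by rewrite subr_eq0 eq_sym.
have m1_gt0 : (1 <= m.-1)%N by case: m m_ge2 => [|[|m]].
rewrite (A_ev_last_lt_max _ _ _ _ m1_gt0) !A_ev_sum B_ev_sum sum_ascent021_seqsS.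
rewrite [(u * v) ^+ m * _]mulr_sumr -sumrB mulr_sumr -!big_split.
apply: eq_big_seq => y yS; have [y_ne le_lm le_ma max0] := ascent021_seqs_facts _ _ yS.
rewrite asc_rcons // max_letter_rcons last_rcons maxn0 ltn0 addn0 expr0 mul1r.
under eq_big_seq => t /(rcons_new_letter _ _ y_ne) [-> -> ->] do rewrite -exprMn.
rewrite sum_new_letters // !expr1n !mul1r.
case: (eqVneq (asc y) m.-1) => [asc_m|_] /=; last by rewrite !mul0r; ring.
rewrite sum_geometric //.
  by rewrite !mul1r; ring.
by rewrite (leq_ltn_trans le_ma) // asc_m ltn_predL (leq_trans _ m_ge2).
Qed.

Lemma B_ev_recurrence (F : fieldType) k m (v : F) : (2 <= m)%N -> v != 1 ->
  B_ev k.+3 m v =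
    B_ev k.+2 m v + A_ev k.+1 m.-1 1 v
    + v / (1 - v) * (A_ev k.+2 m.-1 1 v - v ^+ m * A_ev k.+2 m.-1 1 1).
Proof.
move=> m_ge2 v_ne1; have den_neq0 : 1 - v != 0 by rewrite subr_eq0 eq_sym.
have m1_gt0 : (1 <= m.-1)%N by case: m m_ge2 => [|[|m]].
rewrite (A_ev_last_lt_max _ _ _ _ m1_gt0) !A_ev_sum !B_ev_sum sum_ascent021_seqsS.
rewrite [v ^+ m * _]mulr_sumr -sumrB mulr_sumr -!big_split.
apply: eq_big_seq => y yS; have [y_ne le_lm le_ma max0] := ascent021_seqs_facts _ _ yS.
rewrite asc_rcons // max_letter_rcons last_rcons maxn0 ltn0 addn0.
have -> : (asc y == m) && (0 == max_letter y) = false.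
  apply/negP => /andP [/eqP asc_m /eqP/esym/max0].
  by rewrite asc_m => m0; rewrite m0 in m_ge2.
under eq_big_seq => t /(rcons_new_letter _ _ y_ne) [-> -> ->] do rewrite eqxx andbT.
rewrite mul0r add0r sum_new_letters // !expr1n !mul1r.
case: (eqVneq (asc y) m.-1) => [asc_m|_] /=; last by rewrite !mul0r; ring.
rewrite sum_geometric //.
  by rewrite !mul1r; ring.
by rewrite (leq_ltn_trans le_ma) // asc_m ltn_predL (leq_trans _ m_ge2).
Qed.

Theorem lemma2 (R : fieldType) (n m : nat) (u v : R) :
  (2 <= m)%N ->
  (u * v != 1 ->
     A_ev n m u v =
       B_ev n.-1 m (u * v) + A_ev n.-1 m 1 v + A_ev n.-2 m.-1 1 (u * v)
       + (u * v) / (1 - u * v) *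
         (A_ev n.-1 m.-1 1 (u * v) - (u * v) ^+ m * A_ev n.-1 m.-1 1 1)) /\
  (v != 1 ->
     B_ev n m v =
       B_ev n.-1 m v + A_ev n.-2 m.-1 1 v
       + v / (1 - v) * (A_ev n.-1 m.-1 1 v - v ^+ m * A_ev n.-1 m.-1 1 1)).
Proof.
move=> m_ge2; case: n => [|[|[|k]]] /=; last first.
  by split; [exact: A_ev_recurrence | exact: B_ev_recurrence].
all: have m1_gt0 : (1 <= m.-1)%N by case: m m_ge2 => [|[|m]].
all: split=> _; rewrite !A_ev_eq0 ?B_ev_eq0 ?(leq_trans _ m_ge2) //.
all: by rewrite mulr0 subrr mulr0 !addr0.
Qed.
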